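(* Let $\mathcal{A},\mathcal{B},\mathcal{D},\mathcal{H},\tau,\mathcal{V}>0$ with $\mathcal{A}>2\mathcal{B}(\mathcal{H}+\sqrt{1+\mathcal{H}^2})$, and let $\mathbf{W}^\ast=(U^\ast,V^\ast,S^\ast,0)$ be any spatially homogeneous steady state of (S) with $V^\ast>0$ and $\mathcal{H}V^\ast<1$ (in particular the state $\mathbf{W}_R^\ast$ with $V^\ast=V_R=\frac{\mathcal{A}+\sqrt{\mathcal{A}^2-4\mathcal{B}(\mathcal{B}+\mathcal{A}\mathcal{H})}}{2(\mathcal{B}+\mathcal{A}\mathcal{H})}$ when $\mathcal{H}V_R<1$). Then for no real wavenumber $k\neq0$ does the dispersion relation $\det(\omega I+\mathrm{i}kM-\mathcal{L}^\ast)=0$ admit the root $\omega=0$. In other words, (S) admits no Turing (stationary) instability at such a steady state.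
   Context: The dimensionless model (S): $U_t-\mathcal{V}U_x=\mathcal{A}-U-UV^2$, $V_t+J_x=UV^2-\mathcal{B}V-\mathcal{H}SV$, $\mathcal{D}S_t=\mathcal{B}V+\mathcal{H}SV-S$, $\tau J_t+V_x=-J$. Written as $\mathbf{W}_t+M\mathbf{W}_x=\mathbf{N}(\mathbf{W})$ with $\mathbf{W}=(U,V,S,J)^T$, $\mathbf{N}=(\mathcal{A}-U-UV^2,\ UV^2-\mathcal{B}V-\mathcal{H}SV,\ (\mathcal{B}V+\mathcal{H}SV-S)/\mathcal{D},\ -J/\tau)^T$ and $M$ the $4\times4$ matrix with entries $M_{11}=-\mathcal{V}$, $M_{24}=1$, $M_{42}=1/\tau$ and all other entries zero. $\mathcal{L}^\ast$ is the Jacobian of $\mathbf{N}$ at $\mathbf{W}^\ast$, and $I$ the $4\times4$ identity. Homogeneous steady states with $V^\ast>0$ satisfy $U^\ast=\mathcal{B}/(V^\ast(1-\mathcal{H}V^\ast))$, $S^\ast=\mathcal{B}V^\ast/(1-\mathcal{H}V^\ast)$. *)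

From HB Require Import structures.
From mathcomp Require Import all_boot all_order all_algebra.
From mathcomp Require Import complex.
Set Implicit Arguments. Unset Strict Implicit. Unset Printing Implicit Defensive.
Import Order.TTheory GRing.Theory Num.Theory.
Local Open Scope ring_scope.

(* Model (S) written as W_t + M W_x = N(W), W = (U,V,S,J)^T (indices 0..3). *)

Definition Nvec (R : fieldType) (A B D H tau U V S J : R) : 'cV[R]_4 :=
  \col_(i < 4)
    match nat_of_ord i with
    | 0%N => A - U - U * V ^+ 2
    | 1%N => U * V ^+ 2 - B * V - H * S * V
    | 2%N => (B * V + H * S * V - S) / D
    | _ => - J / tau
    end.

Definition Mmat (R : fieldType) (Vc tau : R) : 'M[R]_4 :=
  \matrix_(i < 4, j < 4)
    match nat_of_ord i, nat_of_ord j with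
    | 0%N, 0%N => - Vc
    | 1%N, 3%N => 1
    | 3%N, 1%N => tau^-1
    | _, _ => 0
    end.

(* L* : the Jacobian matrix of N (w.r.t. (U,V,S,J)) at (U,V,S,J),
   written out entrywise (N is polynomial). *)
Definition Lstar (R : fieldType) (A B D H tau U V S J : R) : 'M[R]_4 :=
  \matrix_(i < 4, j < 4)
    match nat_of_ord i, nat_of_ord j with
    | 0%N, 0%N => - 1 - V ^+ 2
    | 0%N, 1%N => - (2 * U * V)
    | 1%N, 0%N => V ^+ 2
    | 1%N, 1%N => 2 * U * V - B - H * S
    | 1%N, 2%N => - (H * V)
    | 2%N, 1%N => (B + H * S) / D
    | 2%N, 2%N => (H * V - 1) / D
    | 3%N, 3%N => - tau^-1
    | _, _ => 0
    end.

Definition dispersion_matrix (R : rcfType)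
    (A B D H tau Vc U V S J : R) (omega : R[i]) (k : R) : 'M[R[i]]_4 :=
  omega%:M + ((Complex 0 1) * (real_complex R k)) *: map_mx (real_complex R) (Mmat Vc tau)
  - map_mx (real_complex R) (Lstar A B D H tau U V S J).

From HB Require Import structures.
From mathcomp Require Import all_boot all_order all_algebra.
From mathcomp Require Import complex ring.
Set Implicit Arguments. Unset Strict Implicit. Unset Printing Implicit Defensive.
Import Order.TTheory GRing.Theory Num.Theory.
Local Open Scope ring_scope.

(* At omega = 0 the dispersion determinant equals
   ((1 + V^2 - i k Vc) X + 2 U V^3 (1 - H V) / D) / tau, where X is the determinant
   of the (V, S) block of -L* with k^2 added to its V-diagonal entry.  Its imaginary
   part vanishes only if X = 0, and then its real part is 2 U V^3 (1 - H V) / (D tau),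
   which is positive because the steady state gives U (1 + V^2) = A > 0. *)

Lemma det_mx33 (R : comNzRingType) (M : 'M[R]_3) :
  \det M = M 0 0 * (M 1 1 * M 2 2 - M 1 2 * M 2 1)
         - M 0 1 * (M 1 0 * M 2 2 - M 1 2 * M 2 0)
         + M 0 2 * (M 1 0 * M 2 1 - M 1 1 * M 2 0).
Proof.
(* Reindexing by nat makes the ordinals produced by expand_det_row comparable. *)
pose F i j := M (inord i) (inord j).
have ME i j : M i j = F i j by rewrite /F !inord_val.
rewrite !ME /= (expand_det_row _ 0) !big_ord_recl big_ord0 /cofactor.
rewrite !(expand_det_row _ 0) !big_ord_recl !big_ord0 /cofactor !det_mx11 !mxE !ME.
by rewrite /= /bump /=; clearbody F; ring.
Qed.

Lemma det_mx44_sparse (R : comNzRingType) (M : 'M[R]_4) :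
  M 0 2 = 0 -> M 0 3 = 0 -> M 2 0 = 0 -> M 2 3 = 0 -> M 3 0 = 0 -> M 3 2 = 0 ->
  \det M = M 0 0 * (M 1 1 * M 2 2 * M 3 3 - M 1 2 * M 2 1 * M 3 3
                    - M 1 3 * M 2 2 * M 3 1)
           - M 0 1 * M 1 0 * M 2 2 * M 3 3.
Proof.
pose F i j := M (inord i) (inord j).
have ME i j : M i j = F i j by rewrite /F !inord_val.
rewrite !ME /= => h02 h03 h20 h23 h30 h32.
rewrite (expand_det_row _ 0) !big_ord_recl big_ord0 /cofactor !det_mx33 !mxE !ME.
rewrite /= /bump /= h02 h03 h20 h23 h30 h32.
by clearbody F; ring.
Qed.

Definition turing_factor (R : fieldType) (B D H U V S k : R) : R :=
  ((k ^+ 2 + B + H * S - 2 * U * V) * (1 - H * V) + H * V * (B + H * S)) / D.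

Lemma det_dispersion_stationary (R : rcfType) (A B D H tau Vc U V S J k : R) :
  let X := turing_factor B D H U V S k in
  \det (dispersion_matrix A B D H tau Vc U V S J 0 k) =
    Complex (((1 + V ^+ 2) * X + 2 * U * V ^+ 3 * (1 - H * V) / D) / tau)
            (- (k * Vc * X) / tau).
Proof.
rewrite det_mx44_sparse /dispersion_matrix !mxE /= ?mul0rn ?add0r ?rmorph0 ?mulr0 ?subr0 //.
rewrite -!complexr0; simpc.
by congr Complex; rewrite /turing_factor; ring.
Qed.

Lemma steady_state_U_gt0 (R : realFieldType) (A B D H tau U V S J : R) :
  0 < A -> Nvec A B D H tau U V S J = 0 -> 0 < U.
Proof.
move=> hA /(congr1 (fun W : 'cV[R]_4 => W 0 0)); rewrite !mxE /= => hN.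
have hU : U * (1 + V ^+ 2) = A by rewrite -[RHS]subr0 -hN; ring.
by rewrite -(pmulr_lgt0 _ (ltr_pwDl ltr01 (sqr_ge0 V))) hU.
Qed.

Theorem mainTheorem7 (R : rcfType) (A B D H tau Vc : R)
  (hA : 0 < A) (hB : 0 < B) (hD : 0 < D) (hH : 0 < H) (htau : 0 < tau) (hVc : 0 < Vc)
  (hcond : A > 2 * B * (H + Num.sqrt (1 + H ^+ 2)))
  (Us Vs Ss : R)
  (hsteady : Nvec A B D H tau Us Vs Ss 0 = 0)
  (hVpos : 0 < Vs) (hHV : H * Vs < 1) :
  forall k : R, k != 0 ->
    \det (dispersion_matrix A B D H tau Vc Us Vs Ss 0 0 k) != 0.
Proof.
move=> k hk; rewrite det_dispersion_stationary.
set X := turing_factor B D H Us Vs Ss k.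
apply/eqP => -[hre him].
have hX : X = 0.
  move/eqP: him; rewrite mulNr oppr_eq0 mulf_eq0 invr_eq0 (gt_eqF htau) orbF.
  by rewrite mulf_eq0 (negbTE (mulf_neq0 hk (lt0r_neq0 hVc))) => /eqP.
have hU := steady_state_U_gt0 hA hsteady.
have : 0 < 2 * Us * Vs ^+ 3 * (1 - H * Vs) / D / tau.
  apply: divr_gt0 => //; apply: divr_gt0 => //; rewrite mulr_gt0 ?subr_gt0 //.
  by rewrite !mulr_gt0 // exprn_gt0.
by rewrite hX mulr0 add0r in hre; rewrite hre ltxx.
Qed.
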